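(* Let $\varphi$ be a skew-morphism of a finite group $A$ with power function $\pi:A\to\mathbb{Z}_m$, where $m$ is the order of $\varphi$, let $n$ be a positive multiple of $m$, and let $\Pi:A\to\mathbb{Z}_n$ be an extended power function of $\varphi$. Let $\mathrm{Av}:A\to\mathbb{Z}_{n/m}$ and $\Lambda:A\to\mathbb{Z}_{n/m}$ be the average and mate functions of $\Pi$. Then: (a) $\mathrm{Av}(x)\equiv\mathrm{Av}(\varphi(x))\pmod{n/m}$ for all $x\in A$; (b) $\mathrm{Av}$ is a group homomorphism from $A$ into the multiplicative group $\mathbb{Z}_{n/m}^*$; (c) if $\varphi$ is an automorphism of $A$, then $\Lambda(xy)\equiv\Lambda(y)+\Lambda(x)\mathrm{Av}(y)\pmod{n/m}$ for all $x,y\in A$; in particular, if $\mathrm{Av}(x)\equiv1\pmod{n/m}$ for all $x\in A$, then $\Lambda(xy)\equiv\Lambda(x)+\Lambda(y)\pmod{n/m}$ for all $x,y\in A$.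
   Context: A skew-morphism of a finite group $A$ is a permutation $\varphi$ of $A$ with $\varphi(1_A)=1_A$ for which there is a function $\pi:A\to\mathbb{Z}_m$ ($m$ the order of $\varphi$) with $\varphi(xy)=\varphi(x)\varphi^{\pi(x)}(y)$ for all $x,y\in A$; when $\varphi$ is an automorphism, $\pi(x)\equiv1\pmod m$ for all $x$. For a positive multiple $n$ of $m$, $\Pi:A\to\mathbb{Z}_n$ is an extended power function of $\varphi$ if (i) $\Pi(x)\equiv\pi(x)\pmod m$; (ii) $\Pi(1_A)\equiv1\pmod n$; (iii) $\Pi(xy)\equiv\sum_{i=1}^{\Pi(x)}\Pi(\varphi^{i-1}(y))\pmod n$ for all $x,y\in A$. Let $\sigma_\Pi(x,k)=\sum_{i=1}^{k}\Pi(\varphi^{i-1}(x))\in\mathbb{Z}_n$. Since $\sigma_\Pi(x,m)\equiv0\pmod m$, the average function is $\mathrm{Av}(x)=\frac1m\sigma_\Pi(x,m)\in\mathbb{Z}_{n/m}$, and the mate function is $\Lambda(x)=\frac1m(\Pi(x)-\pi(x))\in\mathbb{Z}_{n/m}$, where $\pi(x)$ is represented by an integer congruent to it modulo $m$ (in the automorphism case, by $1$). *)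

From mathcomp Require Import all_boot all_order all_algebra all_fingroup.
Set Implicit Arguments. Unset Strict Implicit. Unset Printing Implicit Defensive.

(* The finite group A is the whole finGroupType gT; phi is a permutation of gT.
   Elements of Z_m / Z_n are represented by natural numbers (congruences mod m, n). *)

Section SkewDefs.
Variable gT : finGroupType.

Definition ord_perm (phi : {perm gT}) : nat := #[phi]%g.

Definition is_skew_morphism (phi : {perm gT}) (pi : gT -> nat) : Prop :=
  phi 1%g = 1%g /\
  forall x y : gT, phi (x * y)%g = (phi x * (phi ^+ pi x)%g y)%g.

Definition is_group_aut (phi : {perm gT}) : Prop :=
  forall x y : gT, phi (x * y)%g = (phi x * phi y)%g.

Definition sigmaPi (phi : {perm gT}) (Pi : gT -> nat) (x : gT) (k : nat) : nat :=
  \sum_(1 <= i < k.+1) Pi ((phi ^+ (i - 1))%g x).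

Definition is_ext_power_fun (phi : {perm gT}) (pi : gT -> nat) (n : nat)
    (Pi : gT -> nat) : Prop :=
  [/\ forall x, Pi x = pi x %[mod ord_perm phi],
      Pi 1%g = 1 %[mod n]
    & forall x y, Pi (x * y)%g = sigmaPi phi Pi y (Pi x) %[mod n]].

Definition Av (phi : {perm gT}) (Pi : gT -> nat) (x : gT) : nat :=
  sigmaPi phi Pi x (ord_perm phi) %/ ord_perm phi.

(* mate function Lambda(x) = (Pi(x) - pi(x))/m, where pirep x is the chosen integer
   representative of pi(x) (in the automorphism case, 1) *)
Definition Mate (phi : {perm gT}) (Pi : gT -> nat) (pirep : gT -> int) (x : gT) : int :=
  (((Pi x)%:Z - pirep x) %/ (ord_perm phi)%:Z)%Z.

End SkewDefs.

From mathcomp Require Import all_boot all_order all_algebra all_fingroup.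
From mathcomp Require Import cyclic ring.
Import GRing.Theory.
Set Implicit Arguments. Unset Strict Implicit.

(* Iterating the skew-morphism identity gives
   phi^k (x y) = phi^k x * phi^(sigma(x,k)) y, and the extended power function
   iterates in the same way: Pi-sums along the orbit of x y are Pi-sums along
   the orbit of y of a Pi-sum along the orbit of x.  For k = m, phi^m = 1 forces
   m | sigma(x,m); writing sigma(x,m) = m Av(x) and using that sigma(y, m L) =
   L sigma(y, m), the composition rule becomes m Av(x y) = m Av(x) Av(y) mod n,
   i.e. Av is multiplicative mod n/m; Av(1) = 1 then makes every Av(x)
   invertible mod n/m, and Av(phi x) = Av(x) because a sum over a full period
   of phi is shift-invariant.  When phi is an automorphism, phi^(pi x)
   = phi, so Pi x = 1 + m Lambda(x), and the same rule applied with
   k = Pi x yields the cocycle identity for Lambda. *)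

Section OrbitSum.
Variables (gT : finGroupType) (phi : {perm gT}) (Pi : gT -> nat).

Definition orbit_sum (x : gT) (k : nat) : nat :=
  \sum_(i < k) Pi ((phi ^+ i)%g x).

Lemma sigmaPiE x k : sigmaPi phi Pi x k = orbit_sum x k.
Proof.
by rewrite /sigmaPi big_add1 big_mkord; apply: eq_bigr => i _; rewrite subn1.
Qed.

Lemma orbit_sum0 x : orbit_sum x 0 = 0.
Proof. exact: big_ord0. Qed.

Lemma orbit_sumS x k : orbit_sum x k.+1 = orbit_sum x k + Pi ((phi ^+ k)%g x).
Proof. exact: big_ord_recr. Qed.

Lemma orbit_sum1 x : orbit_sum x 1 = Pi x.
Proof. by rewrite orbit_sumS orbit_sum0 expg0 perm1. Qed.

Lemma orbit_sumD x a b :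
  orbit_sum x (a + b) = orbit_sum x a + orbit_sum ((phi ^+ a)%g x) b.
Proof.
elim: b => [|b IHb]; first by rewrite addn0 orbit_sum0 addn0.
by rewrite addnS !orbit_sumS IHb -addnA expgD permM.
Qed.

Lemma orbit_sum_orderM x L :
  orbit_sum x (#[phi]%g * L) = L * orbit_sum x #[phi]%g.
Proof.
elim: L => [|L IHL]; first by rewrite muln0 orbit_sum0.
by rewrite mulnS orbit_sumD expg_order perm1 IHL mulSn.
Qed.

Lemma orbit_sum_order_perm x :
  orbit_sum (phi x) #[phi]%g = orbit_sum x #[phi]%g.
Proof.
have := orbit_sumD x 1 #[phi]%g.
rewrite addnC orbit_sumD expg_order perm1 !orbit_sum1 expg1 => /eqP.
by rewrite addnC eqn_add2l => /eqP ->.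
Qed.

(* The junk case k = 0 (possible only when m = 1) is covered too: then
   (k - 1) %/ m = -1 and both sides vanish. *)
Lemma orbit_sum_1mod y k : k = 1 %[mod #[phi]%g] ->
  ((orbit_sum y k)%:Z
   = (Pi y)%:Z + ((k%:Z - 1) %/ (#[phi]%g)%:Z)%Z * (orbit_sum y #[phi]%g)%:Z)%R.
Proof.
case: k => [|k] k1.
  have m1 : #[phi]%g = 1 by apply/eqP; rewrite -dvdn1 /dvdn -k1 mod0n.
  by rewrite m1 divz1 orbit_sum1 orbit_sum0 sub0r mulN1r subrr.
have /dvdnP[L ->] : #[phi]%g %| k by move/eqP: k1; rewrite eqn_mod_dvd // subn1.
rewrite -addn1 PoszD addrK divz_nat mulnK ?order_gt0 //.
rewrite addnC orbit_sumD orbit_sum1 mulnC orbit_sum_orderM.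
by rewrite orbit_sum_order_perm PoszD PoszM.
Qed.

Lemma Av_perm x : Av phi Pi (phi x) = Av phi Pi x.
Proof. by rewrite /Av !sigmaPiE orbit_sum_order_perm. Qed.

End OrbitSum.

Section ExtendedPowerFunction.
Variables (gT : finGroupType) (phi : {perm gT}) (pi Pi : gT -> nat) (n : nat).
Hypothesis skew : is_skew_morphism phi pi.
Hypothesis Pi_pi : forall x, Pi x = pi x %[mod #[phi]%g].
Hypothesis PiM : forall x y, Pi (x * y)%g = orbit_sum phi Pi y (Pi x) %[mod n].

Local Notation m := #[phi]%g.
Local Notation S := (orbit_sum phi Pi).
Local Notation Av := (Av phi Pi).

Lemma skew_expM k x y :
  (phi ^+ k)%g (x * y)%g = ((phi ^+ k)%g x * (phi ^+ S x k)%g y)%g.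
Proof.
elim: k => [|k IHk]; first by rewrite orbit_sum0 !expg0 !perm1.
have phi_Pi : (phi ^+ pi ((phi ^+ k)%g x))%g = (phi ^+ Pi ((phi ^+ k)%g x))%g.
  by rewrite -expg_mod_order -Pi_pi expg_mod_order.
by rewrite expgSr permM IHk skew.2 phi_Pi orbit_sumS expgD !permM.
Qed.

Lemma orbit_sum_order x : S x m = Av x * m.
Proof.
have m_dvd : m %| S x m.
  rewrite order_dvdn; apply/eqP/permP => y.
  by have := skew_expM m x y; rewrite expg_order !perm1 => /mulgI <-.
by rewrite /Av sigmaPiE divnK.
Qed.

Lemma orbit_sumM x y k : S (x * y)%g k = S y (S x k) %[mod n].
Proof.
elim: k => [|k IHk]; first by rewrite !orbit_sum0.
rewrite !orbit_sumS orbit_sumD skew_expM -modnDmr PiM modnDmr.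
by rewrite -modnDml IHk modnDml.
Qed.

Hypothesis m_dvd_n : m %| n.

Lemma AvM x y : Av (x * y)%g = Av x * Av y %[mod n %/ m].
Proof.
apply/eqP; rewrite -(eqn_pmul2r (order_gt0 phi)) !muln_modl divnK //.
rewrite -!orbit_sum_order orbit_sumM orbit_sum_order mulnC orbit_sum_orderM.
by rewrite orbit_sum_order mulnA.
Qed.

Hypothesis Pi1 : Pi 1%g = 1 %[mod n].

Lemma Av1 : Av 1%g = 1 %[mod n %/ m].
Proof.
have phiX1 i : (phi ^+ i)%g 1%g = 1%g.
  by elim: i => [|i IHi]; rewrite ?expg0 ?perm1 // expgSr permM IHi skew.1.
rewrite /Av sigmaPiE /orbit_sum (eq_bigr (fun=> Pi 1%g)) => [|i _]; last first.
  by rewrite phiX1.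
rewrite sum_nat_const card_ord mulKn ?order_gt0 //.
by rewrite -(modn_dvdm _ (dvdn_div m_dvd_n)) Pi1 modn_dvdm // dvdn_div.
Qed.

Lemma coprime_Av x : coprime (Av x) (n %/ m).
Proof.
have : coprime (Av x * Av x^-1) (n %/ m).
  by rewrite -coprime_modl -AvM mulgV Av1 coprime_modl coprime1n.
by rewrite coprimeMl => /andP[].
Qed.

Hypothesis aut : is_group_aut phi.

Local Notation Mate := (Mate phi Pi (fun=> 1%R)).

Lemma aut_Pi_mod x : Pi x = 1 %[mod m].
Proof.
have : (phi ^+ pi x)%g = (phi ^+ 1)%g.
  by apply/permP => y; apply: (@mulgI _ (phi x)); rewrite expg1 -skew.2 aut.
by rewrite Pi_pi => /eqP; rewrite eq_expg_mod_order => /eqP.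
Qed.

Lemma MateE x : (Mate x * m%:Z = (Pi x)%:Z - 1)%R.
Proof.
rewrite /Mate /ord_perm divzK // -eqz_mod_dvd; apply/eqP.
by rewrite (modz_nat (Pi x)) (modz_nat 1) aut_Pi_mod.
Qed.

Lemma MateM x y :
  (Mate (x * y)%g = Mate y + Mate x * (Av y)%:Z %[mod (n %/ m)%:Z])%Z.
Proof.
have m_neq0 : (m%:Z != 0)%R by rewrite eqz_nat -lt0n order_gt0.
have scaled : ((Mate (x * y)%g - (Mate y + Mate x * (Av y)%:Z)) * m%:Z
               = (Pi (x * y)%g)%:Z - (S y (Pi x))%:Z)%R.
  rewrite mulrBl mulrDl -mulrA -PoszM -orbit_sum_order !MateE.
  by rewrite (orbit_sum_1mod Pi y (aut_Pi_mod x)) /Mate /ord_perm /=; ring.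
apply/eqP; rewrite eqz_mod_dvd -(dvdz_mul2r m_neq0) -PoszM divnK // scaled.
by rewrite -eqz_mod_dvd !modz_nat PiM.
Qed.

Lemma MateM_Av1 : (forall x, Av x = 1 %[mod n %/ m]) ->
  forall x y, (Mate (x * y)%g = Mate x + Mate y %[mod (n %/ m)%:Z])%Z.
Proof.
move=> Av_1 x y; rewrite MateM; apply/eqP; rewrite eqz_mod_dvd.
have -> : (Mate y + Mate x * (Av y)%:Z - (Mate x + Mate y)
           = Mate x * ((Av y)%:Z - 1))%R by ring.
by apply: dvdz_mull; rewrite -eqz_mod_dvd (modz_nat (Av y)) (modz_nat 1) Av_1.
Qed.

End ExtendedPowerFunction.

Theorem proposition3p3 (gT : finGroupType) (phi : {perm gT}) (pi : gT -> nat)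
    (n : nat) (Pi : gT -> nat) :
  is_skew_morphism phi pi ->
  0 < n -> ord_perm phi %| n ->
  is_ext_power_fun phi pi n Pi ->
  [/\ (* (a) *)
      (forall x : gT, Av phi Pi x = Av phi Pi (phi x) %[mod n %/ ord_perm phi]),
      (* (b) Av : A -> (Z_{n/m})^* is a group homomorphism *)
      (forall x : gT, coprime (Av phi Pi x) (n %/ ord_perm phi)) /\
      (forall x y : gT,
         Av phi Pi (x * y)%g = Av phi Pi x * Av phi Pi y %[mod n %/ ord_perm phi])
    & (* (c) *)
      is_group_aut phi ->
      (forall x y : gT,
         (Mate phi Pi (fun _ => 1%R) (x * y)%g
          = Mate phi Pi (fun _ => 1%R) y
            + Mate phi Pi (fun _ => 1%R) x * (Av phi Pi y)%:Z
            %[mod (n %/ ord_perm phi)%:Z])%Z) /\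
      ((forall x : gT, Av phi Pi x = 1 %[mod n %/ ord_perm phi]) ->
       forall x y : gT,
         (Mate phi Pi (fun _ => 1%R) (x * y)%g
          = Mate phi Pi (fun _ => 1%R) x + Mate phi Pi (fun _ => 1%R) y
            %[mod (n %/ ord_perm phi)%:Z])%Z)].
Proof.
move=> skew _ m_dvd_n [Pi_pi Pi1 PiM].
have {}PiM x y : Pi (x * y)%g = orbit_sum phi Pi y (Pi x) %[mod n].
  by rewrite PiM sigmaPiE.
split=> [x | | aut].
- by rewrite Av_perm.
- split; first exact: coprime_Av skew Pi_pi PiM m_dvd_n Pi1.
  exact: AvM skew Pi_pi PiM m_dvd_n.
- split; first exact: MateM skew Pi_pi PiM m_dvd_n aut.
  exact: MateM_Av1 skew Pi_pi PiM m_dvd_n aut.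
Qed.
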